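(* Let $\mathcal{X}\subset\mathbb{R}^n$ be a convex connected domain and $K:\mathcal{X}\to\mathbb{R}$ a smooth function whose Hessian $G(x)=\nabla^2K(x)$ is invertible for all $x$. Let $\mathcal{U}=\mathbb{R}^m$, $\mathcal{Y}=\mathcal{U}^*\cong\mathbb{R}^m$, let $\sigma$ be an $m\times m$ signature matrix, and consider the smooth system $\dot x=F(x,u)$, $y=H(x,u)$. Then the system is reciprocal with respect to $G$ and $\sigma$ if and only if for all $x,u$ $$\sigma\frac{\partial H(x,u)}{\partial u}=\Big(\frac{\partial H(x,u)}{\partial u}\Big)^\top\sigma,\qquad G(x)\frac{\partial F(x,u)}{\partial u}=\Big(\frac{\partial H(x,u)}{\partial x}\Big)^\top\sigma,\qquad G(x)\frac{\partial F(x,u)}{\partial x}=\Big(\frac{\partial F(x,u)}{\partial x}\Big)^\top G(x).$$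
   Context: A signature matrix is a diagonal matrix with diagonal entries $\pm1$. Partial derivative matrices are Jacobians. On $T^*\mathcal{X}\times\mathcal{U}\times\mathcal{Y}$ with coordinates $(x,p,u,y)$ consider the symplectic form $\omega=\sum_i dp_i\wedge dx_i+\sum_j dy_j\wedge du_j$; a Lagrangian submanifold is a submanifold on which $\omega$ vanishes and which is maximal with this property. The system is reciprocal with respect to $G$ and $\sigma$ if the set $\{(x,p,u,y): p=G(x)F(x,u),\ y=\sigma H(x,u)\}$ is a Lagrangian submanifold of $T^*\mathcal{X}\times\mathcal{U}\times\mathcal{Y}$. *)

From HB Require Import structures.
From mathcomp Require Import all_boot all_order all_algebra.
From mathcomp Require Import all_classical all_reals all_analysis.
Set Implicit Arguments. Unset Strict Implicit. Unset Printing Implicit Defensive.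
Import Order.TTheory GRing.Theory Num.Theory.
Import numFieldNormedType.Exports.
Local Open Scope classical_set_scope.
Local Open Scope ring_scope.

Section Defs.
Variable R : realType.

Fixpoint Ck_on {V W : normedModType R} (k : nat) (A : set V) (f : V -> W)
    : Prop :=
  match k with
  | 0%N => forall x, A x -> {for x, continuous f}
  | k'.+1 => (forall x, A x -> differentiable f x) /\
             (forall v : V, Ck_on k' A (fun x => 'D_v f x))
  end.

Definition smooth_on {V W : normedModType R} (A : set V) (f : V -> W) :=
  forall k, Ck_on k A f.

(** Jacobian matrix (column-vector convention): jac f x i j = d f_i / d x_j. *)
Definition jac (n m : nat) (f : 'cV[R]_n -> 'cV[R]_m) (x : 'cV[R]_n)
    : 'M[R]_(m, n) :=
  \matrix_(i < m, j < n) ('d f x (delta_mx j ord0)) i ord0.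

Definition grad (n : nat) (K : 'cV[R]_n -> R) (x : 'cV[R]_n) : 'cV[R]_n :=
  \col_(i < n) ('d K x (delta_mx i ord0)).

Definition hessian (n : nat) (K : 'cV[R]_n -> R) (x : 'cV[R]_n) : 'M[R]_n :=
  jac (grad K) x.

Definition signature_matrix (m : nat) (s : 'M[R]_m) : Prop :=
  is_diag_mx s /\ forall i, s i i = 1 \/ s i i = -1.

(** Points of T^*X x U x Y are quadruples (x, p, u, y). *)
Definition phase (n m : nat) :=
  ('cV[R]_n * 'cV[R]_n * 'cV[R]_m * 'cV[R]_m)%type.

(** omega = sum_i dp_i /\ dx_i + sum_j dy_j /\ du_j evaluated on two
    tangent vectors. *)
Definition omega (n m : nat) (v w : phase n m) : R :=
  let: (a, b, c, d) := v in let: (a', b', c', d') := w in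
  (\sum_(i < n) (b i ord0 * a' i ord0 - b' i ord0 * a i ord0)) +
  (\sum_(j < m) (d j ord0 * c' j ord0 - d' j ord0 * c j ord0)).

Definition lagrangian_subspace (n m : nat) (T : set (phase n m)) : Prop :=
  (forall v w, T v -> T w -> omega v w = 0) /\
  (forall T' : set (phase n m),
      T `<=` T' ->
      (forall v w, T' v -> T' w -> omega v w = 0) ->
      (forall v w : phase n m, T' v -> T' w -> T' (v + w)) ->
      (forall (a : R) v, T' v -> T' (a *: v)) ->
      T' = T).

(** The set L = { (x,p,u,y) : p = G(x)F(x,u), y = sigma H(x,u), x in X }
    is the image of the graph parametrization Phi(x,u) = (x, G F, u, sigma H)
    over X x U; its tangent space at Phi(x,u) is the range of d Phi(x,u).
    L is a Lagrangian submanifold iff every tangent space is Lagrangian. *)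
Definition graph_param (n m : nat) (G : 'cV[R]_n -> 'M[R]_n)
    (sigma : 'M[R]_m) (F : 'cV[R]_n -> 'cV[R]_m -> 'cV[R]_n)
    (H : 'cV[R]_n -> 'cV[R]_m -> 'cV[R]_m)
    (z : 'cV[R]_n * 'cV[R]_m) : phase n m :=
  (z.1, G z.1 *m F z.1 z.2, z.2, sigma *m H z.1 z.2).

Definition reciprocal (n m : nat) (X : set 'cV[R]_n) (G : 'cV[R]_n -> 'M[R]_n)
    (sigma : 'M[R]_m) (F : 'cV[R]_n -> 'cV[R]_m -> 'cV[R]_n)
    (H : 'cV[R]_n -> 'cV[R]_m -> 'cV[R]_m) : Prop :=
  forall x u, X x ->
    lagrangian_subspace
      (range ('d (graph_param G sigma F H) (x, u) : _ -> phase n m)).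

End Defs.

From HB Require Import structures.
From mathcomp Require Import all_boot all_order all_algebra.
From mathcomp Require Import all_classical all_reals all_analysis.
From mathcomp Require Import ring lra.
Set Implicit Arguments. Unset Strict Implicit. Unset Printing Implicit Defensive.
Import Order.TTheory GRing.Theory Num.Theory.
Import numFieldNormedType.Exports.
Local Open Scope classical_set_scope.
Local Open Scope ring_scope.

(* The set L is the image of Phi(x, u) = (x, G F, u, sigma H), so it is
   Lagrangian iff the range of every d Phi(x, u) is.  That range is the graph
   of a map (a, c) |-> (beta, delta) over the (x, u)-directions, and such a
   graph is Lagrangian as soon as it is isotropic.  Evaluating omega on basis
   vectors turns isotropy into the three matrix identities; the extra term
   (D_a G) F of beta is harmless because symmetry of the third derivatives of
   K makes <(D_a G) F, a'> symmetric in a and a'.  Symmetry of mixed partials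
   follows from the mean value theorem applied twice to a second difference. *)

Section smooth_on.
Context {R : realType} {V W : normedModType R}.
Implicit Types (A : set V) (f : V -> W).

Lemma smooth_on_differentiable A f y : smooth_on A f -> A y -> differentiable f y.
Proof. by move=> sf Ay; exact: (sf 1%N).1 y Ay. Qed.

Lemma smooth_on_derive A f v : smooth_on A f -> smooth_on A ('D_v f).
Proof. by move=> sf k; exact: (sf k.+1).2 v. Qed.

Lemma smooth_on_continuous A f y : smooth_on A f -> A y -> {for y, continuous f}.
Proof. by move=> sf Ay; exact: sf 0%N y Ay. Qed.

End smooth_on.

Section near_eq.
Context {R : realType} {V W : normedModType R}.

Lemma near_eq_is_diff (f g : V -> W) x :
  (\forall y \near x, f y = g y) -> differentiable g x -> is_diff x f ('d g x).
Proof.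
move=> fg dg.
have fx : f x = g x := nbhs_singleton fg.
have df : f \o shift x = cst (f x) + 'd g x +o_ 0 id.
  apply/eqaddoP => eps eps0.
  have /eqaddoP /(_ eps eps0) dgo := diff_locally dg.
  move: fg; rewrite nbhs0P => fg.
  near=> h.
  have -> : (f \o shift x - (cst (f x) + 'd g x)) h = f (h + x) - (g x + 'd g x h).
    by rewrite /= fx.
  by rewrite [h + x]addrC (near fg h) // [x + h]addrC; near: h.
have dfg : 'd f x = 'd g x :> (V -> W).
  by apply: diff_unique => //; exact: diff_continuous.
have dfx : differentiable f x.
  by apply/diff_locallyP; rewrite dfg; split => //; exact: diff_continuous.
exact: DiffDef dfx dfg.
Unshelve. all: by end_near. Qed.

Lemma open_near (A : set V) y (P : V -> Prop) :
  open A -> A y -> (forall p, A p -> P p) -> \forall p \near y, P p.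
Proof. by move=> oA Ay AP; apply: filterS AP _; exact: open_nbhs_nbhs. Qed.

Lemma open_eq_derive (A : set V) (f g : V -> W) y v :
  open A -> A y -> (forall p, A p -> f p = g p) -> 'D_v f y = 'D_v g y.
Proof. by move=> oA Ay fg; apply: near_eq_derive; exact: open_near fg. Qed.

End near_eq.

Section second_difference.
Context {R : realType} {V : normedModType R}.

Lemma is_derive_line {W : normedModType R} (f : V -> W) (a u : V) (s : R) :
  differentiable f (a + s *: u) ->
  is_derive s 1 (fun r : R => f (a + r *: u)) ('D_u f (a + s *: u)).
Proof.
move=> df.
have quot_eq : (fun h : R => h^-1 *: (f (a + (h *: 1 + s) *: u) - f (a + s *: u))) =
    (fun h : R => h^-1 *: (f (h *: u + (a + s *: u)) - f (a + s *: u))).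
  apply/funext => h; congr (_ *: (_ - _)); congr f.
  by rewrite scalerDl -[h *: 1]/(h * 1) mulr1 addrCA.
have der : derivable (fun r : R => f (a + r *: u)) s 1.
  by rewrite /derivable /= quot_eq; exact: diff_derivable.
have -> : 'D_u f (a + s *: u) = 'D_1 (fun r : R => f (a + r *: u)) s.
  by rewrite /derive /= quot_eq.
exact: derivableP der.
Qed.

Lemma MVT_closed (phi dphi : R -> R) (t : R) : 0 < t ->
  (forall s, 0 <= s <= t -> is_derive s 1 phi (dphi s)) ->
  exists2 c, 0 < c < t & phi t - phi 0 = t * dphi c.
Proof.
move=> t0 dphi_phi.
have dphi_open : forall c, c \in `]0, t[ -> is_derive c 1 phi (dphi c).
  by move=> c; rewrite in_itv /= => /andP[c0 ct]; apply: dphi_phi; rewrite !ltW.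
have phi_cont : {within `[0, t], continuous phi}.
  apply: derivable_within_continuous => c; rewrite in_itv /= => cI.
  by have [] := dphi_phi c cI.
have [c cI ->] := MVT t0 dphi_open phi_cont.
by exists c; [move: cI; rewrite in_itv | rewrite subr0 mulrC].
Qed.

Definition second_difference (g : V -> R) (y u v : V) (t : R) :=
  g (y + t *: u + t *: v) - g (y + t *: u) - g (y + t *: v) + g y.

Lemma second_differenceC g y u v t :
  second_difference g y u v t = second_difference g y v u t.
Proof. by rewrite /second_difference [y + t *: v + _]addrAC; ring. Qed.

Lemma second_difference_mvt (g : V -> R) (A : set V) (y u v : V) (t : R) :
  0 < t ->
  (forall s r, 0 <= s <= t -> 0 <= r <= t -> A (y + s *: u + r *: v)) ->
  (forall p, A p -> differentiable g p) ->
  (forall p, A p -> differentiable ('D_u g) p) ->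
  exists2 xi, 0 <= xi <= t & exists2 eta, 0 <= eta <= t &
    second_difference g y u v t = t * t * 'D_v ('D_u g) (y + xi *: u + eta *: v).
Proof.
move=> t0 Aseg dg dDug.
have [xi /andP[xi0 xit] Ephi] : exists2 xi, 0 < xi < t &
    (g (y + t *: v + t *: u) - g (y + t *: u)) -
    (g (y + t *: v + 0 *: u) - g (y + 0 *: u)) =
    t * ('D_u g (y + t *: v + xi *: u) - 'D_u g (y + xi *: u)).
  apply: (MVT_closed (phi := fun s => g (y + t *: v + s *: u) - g (y + s *: u)))
    => // s s0t.
  apply: is_deriveB; apply: is_derive_line; apply: dg.
    by rewrite addrAC; apply: Aseg => //; rewrite lexx ltW.
  by rewrite -[y + s *: u]addr0 -(scale0r v); apply: Aseg => //; rewrite lexx ltW.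
have [eta /andP[eta0 etat] Epsi] : exists2 eta, 0 < eta < t &
    'D_u g (y + xi *: u + t *: v) - 'D_u g (y + xi *: u + 0 *: v) =
    t * 'D_v ('D_u g) (y + xi *: u + eta *: v).
  apply: (MVT_closed (phi := fun r => 'D_u g (y + xi *: u + r *: v))) => // r r0t.
  by apply: is_derive_line; apply: dDug; apply: Aseg => //; rewrite !ltW.
exists xi; first by rewrite !ltW.
exists eta; first by rewrite !ltW.
move: Ephi Epsi; rewrite !scale0r !addr0 ![y + t *: v + _]addrAC => Ephi Epsi.
by rewrite -mulrA -Epsi -Ephi /second_difference; ring.
Qed.

Lemma second_difference_cvg (A : set V) (g : V -> R) y u v :
  open A -> A y ->
  (forall p, A p -> differentiable g p) ->
  (forall p, A p -> differentiable ('D_u g) p) ->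
  {for y, continuous ('D_v ('D_u g))} ->
  (fun t => (t * t)^-1 * second_difference g y u v t) @ 0^'+ -->
    'D_v ('D_u g) y.
Proof.
move=> oA Ay dg dDug cD2; apply/cvgrPdist_lt => e e0.
have : \forall p \near y, A p /\ `|'D_v ('D_u g) y - 'D_v ('D_u g) p| < e.
  near=> p; split; near: p; first exact: open_nbhs_nbhs.
  exact: (cvgrPdist_lt _ _).1 cD2 _ e0.
move=> /nbhs_ballP[r r0 Br].
have k0 : 0 < `|u| + `|v| + 1 by rewrite ltr_wpDl // addr_ge0.
near=> t.
have t0 : 0 < t by near: t; exact: nbhs_right_gt.
have tk : t * (`|u| + `|v| + 1) < r.
  by rewrite -ltr_pdivlMr //; near: t; apply: nbhs_right_lt; rewrite divr_gt0.
have seg s q : 0 <= s <= t -> 0 <= q <= t -> ball y r (y + s *: u + q *: v).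
  move=> /andP[s0 st] /andP[q0 qt].
  rewrite -ball_normE /= -addrA opprD addrA subrr add0r normrN.
  apply: le_lt_trans (ler_normD _ _) _; rewrite !normrZ !ger0_norm //.
  have : s * `|u| <= t * `|u| by rewrite ler_wpM2r.
  have : q * `|v| <= t * `|v| by rewrite ler_wpM2r.
  nra.
have [xi xiI [eta etaI ->]] := second_difference_mvt t0 seg
  (fun p Bp => dg p (Br p Bp).1) (fun p Bp => dDug p (Br p Bp).1).
rewrite mulrA mulVf ?mul1r; last by rewrite mulf_neq0 // gt_eqF.
exact: (Br _ (seg _ _ xiI etaI)).2.
Unshelve. all: by end_near. Qed.

Lemma derive_commute (A : set V) (g : V -> R) y u v :
  open A -> A y ->
  (forall p, A p -> differentiable g p) ->
  (forall p, A p -> differentiable ('D_u g) p) ->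
  (forall p, A p -> differentiable ('D_v g) p) ->
  {for y, continuous ('D_v ('D_u g))} -> {for y, continuous ('D_u ('D_v g))} ->
  'D_v ('D_u g) y = 'D_u ('D_v g) y.
Proof.
move=> oA Ay dg dDug dDvg cDvu cDuv.
apply: (cvg_unique (@Rhausdorff R) (second_difference_cvg oA Ay dg dDug cDvu)).
have -> : second_difference g y u v = second_difference g y v u.
  by apply/funext => t; exact: second_differenceC.
exact: (second_difference_cvg oA Ay dg dDvg cDuv).
Qed.

Lemma smooth_on_derive_commute (A : set V) (g : V -> R) :
  open A -> smooth_on A g -> forall u v y, A y -> 'D_v ('D_u g) y = 'D_u ('D_v g) y.
Proof.
move=> oA sg u v y Ay; apply: (derive_commute oA Ay).
- by move=> p; exact: smooth_on_differentiable.
- by move=> p; apply: smooth_on_differentiable; exact: smooth_on_derive.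
- by move=> p; apply: smooth_on_differentiable; exact: smooth_on_derive.
- by apply: smooth_on_continuous Ay; do 2!apply: smooth_on_derive.
- by apply: smooth_on_continuous Ay; do 2!apply: smooth_on_derive.
Qed.

End second_difference.

Section matrix_valued.
Context {R : realType} {V : normedModType R}.

Lemma differentiable_mx p q (M : V -> 'M[R]_(p, q)) x :
  (forall i j, differentiable (fun y => M y i j) x) -> differentiable M x.
Proof.
move=> dM.
have -> : M = \sum_(i < p) \sum_(j < q) (fun y => M y i j *: delta_mx i j).
  apply/funext => y; rewrite fct_sumE [LHS]matrix_sum_delta.
  by apply: eq_bigr => i _; rewrite fct_sumE.
by do 2![apply: differentiable_sum => ?]; exact: differentiableZl.
Qed.

Lemma differentiable_entry p q (M : V -> 'M[R]_(p, q)) x i j :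
  differentiable M x -> differentiable (fun y => M y i j) x.
Proof. by move=> dM; exact: differentiable_comp dM (differentiable_coord _ _ _). Qed.

Lemma derive_entry p q (M : V -> 'M[R]_(p, q)) x v i j :
  derivable M x v -> 'D_v (fun y => M y i j) x = 'D_v M x i j.
Proof. by move=> dM; rewrite derive_mx // mxE. Qed.

Section product_rule.
Variables (p q r : nat) (M : V -> 'M[R]_(p, q)) (N : V -> 'M[R]_(q, r)) (x : V).
Hypotheses (dM : differentiable M x) (dN : differentiable N x).

Let mulmx_entry i k :
  (fun y => (M y *m N y) i k) = \sum_(j < q) ((fun y => M y i j) * (fun y => N y j k)).
Proof. by apply/funext => y; rewrite mxE fct_sumE. Qed.

Lemma differentiable_mulmx : differentiable (fun y => M y *m N y) x.
Proof.
apply: differentiable_mx => i k; rewrite mulmx_entry.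
by apply: differentiable_sum => j; apply: differentiableM; exact: differentiable_entry.
Qed.

Lemma diff_mulmx v : 'd (fun y => M y *m N y) x v = 'D_v M x *m N x + M x *m 'D_v N x.
Proof.
rewrite -deriveE; last exact: differentiable_mulmx.
apply/matrixP => i k.
rewrite -derive_entry; last exact/diff_derivable/differentiable_mulmx.
have dMN j : differentiable ((fun y => M y i j) * (fun y => N y j k)) x.
  by apply: differentiableM; exact: differentiable_entry.
rewrite mulmx_entry derive_sum => [|j]; last exact: diff_derivable.
rewrite !mxE -big_split; apply: eq_bigr => j _ /=.
rewrite deriveM ?derive_entry; try exact/diff_derivable/differentiable_entry.
  by rewrite addrC; congr (_ + _); exact: mulrC.
all: exact: diff_derivable.
Qed.

End product_rule.
End matrix_valued.

Lemma diff_jac {R : realType} n p (f : 'cV[R]_n -> 'cV[R]_p) x a :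
  'd f x a = jac f x *m a.
Proof.
rewrite {1}[a]matrix_sum_delta linear_sum.
apply/matrixP => i j; rewrite (ord1 j) !mxE summxE; apply: eq_bigr => k _.
by rewrite big_ord1 linearZ !mxE mulrC.
Qed.

Section partial_derivatives.
Context {R : realType} {U V W : normedModType R}.

Global Instance is_diff_fst (z : U * V) : is_diff z fst fst.
Proof.
have fst_lin : linear (@fst U V) by [].
pose fstL : {linear (U * V)%type -> U} :=
  HB.pack (@fst U V) (GRing.isLinear.Build _ _ _ _ _ fst_lin).
have fst_cont : continuous fstL by move=> y; exact: cvg_fst.
exact: DiffDef (linear_differentiable z fst_cont) (diff_lin z fst_cont).
Qed.

Global Instance is_diff_snd (z : U * V) : is_diff z snd snd.
Proof.
have snd_lin : linear (@snd U V) by [].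
pose sndL : {linear (U * V)%type -> V} :=
  HB.pack (@snd U V) (GRing.isLinear.Build _ _ _ _ _ snd_lin).
have snd_cont : continuous sndL by move=> y; exact: cvg_snd.
exact: DiffDef (linear_differentiable z snd_cont) (diff_lin z snd_cont).
Qed.

Lemma diff_partial (f : U * V -> W) x u t : differentiable f (x, u) ->
  'd f (x, u) t = 'd (fun y => f (y, u)) x t.1 + 'd (fun c => f (x, c)) u t.2.
Proof.
move=> df.
have -> : 'd (fun y => f (y, u)) x t.1 = 'd f (x, u) (t.1, 0).
  by rewrite -[fun y => _]/(f \o (fun y => (y, u))) diff_comp //= diff_val.
have -> : 'd (fun c => f (x, c)) u t.2 = 'd f (x, u) (0, t.2).
  by rewrite -[fun c => _]/(f \o (fun c => (x, c))) diff_comp //= diff_val.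
rewrite -linearD; case: t => a c /=.
by rewrite -[(a, 0) + (0, c)]/(a + 0, 0 + c) addr0 add0r.
Qed.

End partial_derivatives.

Section dot.
Context {R : realType}.

Definition dot n (a b : 'cV[R]_n) : R := \sum_i a i ord0 * b i ord0.

Lemma dotDl n (a b c : 'cV[R]_n) : dot (a + b) c = dot a c + dot b c.
Proof. by rewrite /dot -big_split; apply: eq_bigr => i _; rewrite mxE mulrDl. Qed.

Lemma dot0r n (a : 'cV[R]_n) : dot a 0 = 0.
Proof. by rewrite /dot big1 // => i _; rewrite mxE mulr0. Qed.

Lemma dot_mulmx n p (M : 'M[R]_(n, p)) a b : dot (M *m a) b = dot (M^T *m b) a.
Proof.
rewrite /dot; under eq_bigr do rewrite mxE big_distrl.
rewrite exchange_big; apply: eq_bigr => j _; rewrite mxE big_distrl.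
by apply: eq_bigr => i _; rewrite mxE /=; ring.
Qed.

Lemma dot_delta n (a : 'cV[R]_n) l : dot a (delta_mx l ord0) = a l ord0.
Proof.
rewrite /dot (bigD1 l) //= big1 ?addr0; first by rewrite mxE !eqxx mulr1.
by move=> i /negbTE il; rewrite mxE il mulr0.
Qed.

Lemma dot_mulmx_delta n p (M : 'M[R]_(n, p)) k l :
  dot (M *m delta_mx k ord0) (delta_mx l ord0) = M l k.
Proof.
rewrite dot_delta mxE (bigD1 k) //= big1 ?addr0; first by rewrite mxE !eqxx mulr1.
by move=> i /negbTE ik; rewrite mxE ik mulr0.
Qed.

Lemma omegaE n m (a b : 'cV[R]_n) (c d : 'cV[R]_m) a' b' c' d' :
  omega (a, b, c, d) (a', b', c', d') = dot b a' - dot b' a + (dot d c' - dot d' c).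
Proof. by rewrite /omega /= !sumrB. Qed.

End dot.

Lemma derive_sum_delta {R : realType} {W : normedModType R} n (h : 'cV[R]_n -> W) y a :
  differentiable h y -> 'D_a h y = \sum_k a k ord0 *: 'D_(delta_mx k ord0) h y.
Proof.
move=> dh; rewrite deriveE // {1}[a]matrix_sum_delta linear_sum.
by apply: eq_bigr => k _; rewrite big_ord1 linearZ deriveE.
Qed.

Section hessian.
Context {R : realType} (n : nat) (X : set 'cV[R]_n) (K : 'cV[R]_n -> R).
Hypotheses (oX : open X) (sK : smooth_on X K).

Local Notation e i := (delta_mx i ord0 : 'cV[R]_n).

(* Several steps below use plain [exact] and fully instantiated lemmas: with
   [rewrite] or [exact:] the unifier tries to match distinct nested ['D] terms
   by unfolding [derive], which takes minutes. *)

Lemma gradE y : X y -> grad K y = \col_i 'D_(e i) K y.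
Proof.
move=> Xy; apply/matrixP => i j; rewrite !mxE deriveE //.
exact: smooth_on_differentiable sK Xy.
Qed.

Let differentiable_partials y : X y -> differentiable (fun z => \col_i 'D_(e i) K z) y.
Proof.
move=> Xy; apply: differentiable_mx => i j.
under eq_fun do rewrite mxE.
by apply: smooth_on_differentiable Xy; exact: smooth_on_derive.
Qed.

Let differentiable_second_partials y : X y ->
  differentiable (fun z => \matrix_(i, j) 'D_(e j) ('D_(e i) K) z) y.
Proof.
move=> Xy; apply: differentiable_mx => i j.
under eq_fun do rewrite mxE.
by apply: smooth_on_differentiable Xy; do 2!apply: smooth_on_derive.
Qed.

Lemma hessianE y : X y -> hessian K y = \matrix_(i, j) 'D_(e j) ('D_(e i) K) y.
Proof.
move=> Xy; have dP := differentiable_partials Xy.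
have [_ dgrad] := near_eq_is_diff (open_near oX Xy gradE) dP.
apply/matrixP => i j; rewrite /hessian /jac mxE dgrad -(deriveE (e j) dP).
rewrite -derive_entry; last exact: diff_derivable.
by under eq_fun do rewrite mxE; rewrite mxE.
Qed.

Lemma differentiable_hessian y : X y -> differentiable (hessian K) y.
Proof.
move=> Xy; have dS := differentiable_second_partials Xy.
by have [] := near_eq_is_diff (open_near oX Xy hessianE) dS.
Qed.

Lemma derive_hessian y a : X y ->
  'D_a (hessian K) y = \matrix_(i, j) 'D_a ('D_(e j) ('D_(e i) K)) y.
Proof.
move=> Xy; rewrite (near_eq_derive _ (open_near oX Xy hessianE)).
rewrite derive_mx; last exact/diff_derivable/differentiable_second_partials.
apply: eq_mx => i j; congr ('D_a _ y).
by apply/funext => z; rewrite mxE.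
Qed.

Lemma trmx_hessian y : X y -> (hessian K y)^T = hessian K y.
Proof.
move=> Xy; rewrite hessianE //; apply/matrixP => i j; rewrite !mxE.
exact (smooth_on_derive_commute oX sK _ _ Xy).
Qed.

Lemma derive3_commute y u v w : X y ->
  'D_w ('D_v ('D_u K)) y = 'D_u ('D_v ('D_w K)) y.
Proof.
move=> Xy.
have Duv : forall p, X p -> 'D_v ('D_u K) p = 'D_u ('D_v K) p.
  exact (smooth_on_derive_commute oX sK u v).
have Dvw : forall p, X p -> 'D_w ('D_v K) p = 'D_v ('D_w K) p.
  exact (smooth_on_derive_commute oX sK v w).
have Dwu := smooth_on_derive_commute oX (smooth_on_derive v sK) u w Xy.
exact (eq_trans (open_eq_derive w oX Xy Duv)
  (eq_trans Dwu (open_eq_derive u oX Xy Dvw))).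
Qed.

Lemma dot_derive_hessian y (f : 'cV[R]_n) a b : X y ->
  dot ('D_a (hessian K) y *m f) b = \sum_j f j ord0 * 'D_b ('D_(e j) ('D_a K)) y.
Proof.
move=> Xy; rewrite /dot; under eq_bigr do rewrite mxE big_distrl.
rewrite exchange_big; apply: eq_bigr => j _ /=.
have dDjDa : differentiable ('D_(e j) ('D_a K)) y.
  exact (smooth_on_differentiable (smooth_on_derive _ (smooth_on_derive _ sK)) Xy).
rewrite (derive_sum_delta b dDjDa) big_distrr; apply: eq_bigr => i _ /=.
have DaH : 'D_a (hessian K) y i j = 'D_(e i) ('D_(e j) ('D_a K)) y.
  by rewrite (derive_hessian a Xy) mxE; exact (derive3_commute (e i) (e j) a Xy).
have reorder (z : R) : z * f j ord0 * b i ord0 = f j ord0 * (b i ord0 *: z).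
  by rewrite -[_ *: z]/(_ * z); ring.
exact (etrans (congr1 (fun z => z * f j ord0 * b i ord0) DaH) (reorder _)).
Qed.

Lemma dot_derive_hessianC y (f : 'cV[R]_n) a b : X y ->
  dot ('D_a (hessian K) y *m f) b = dot ('D_b (hessian K) y *m f) a.
Proof.
move=> Xy.
have D3 j : f j ord0 * 'D_b ('D_(e j) ('D_a K)) y =
            f j ord0 * 'D_a ('D_(e j) ('D_b K)) y.
  exact (congr1 (GRing.mul (f j ord0)) (derive3_commute a (e j) b Xy)).
exact (etrans (dot_derive_hessian f a b Xy)
  (etrans (eq_bigr _ (fun j _ => D3 j)) (esym (dot_derive_hessian f b a Xy)))).
Qed.

End hessian.

Section graph_param_differential.
Context {R : realType} (n m : nat).
Implicit Types (F : 'cV[R]_n -> 'cV[R]_m -> 'cV[R]_n)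
  (H : 'cV[R]_n -> 'cV[R]_m -> 'cV[R]_m).

Lemma diff_partial_jac p (f : 'cV[R]_n -> 'cV[R]_m -> 'cV[R]_p) x u t :
  differentiable (fun z => f z.1 z.2) (x, u) ->
  'd (fun z => f z.1 z.2) (x, u) t = jac (f ^~ u) x *m t.1 + jac (f x) u *m t.2.
Proof. by move=> df; rewrite diff_partial // !diff_jac. Qed.

Lemma diff_graph_param (G : 'cV[R]_n -> 'M[R]_n) sigma F H x u :
  differentiable G x ->
  differentiable (fun z => F z.1 z.2) (x, u) ->
  differentiable (fun z => H z.1 z.2) (x, u) ->
  'd (graph_param G sigma F H) (x, u) =
  (fun t => (t.1, 'D_(t.1) G x *m F x u +
                    G x *m (jac (F ^~ u) x *m t.1 + jac (F x) u *m t.2),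
             t.2, sigma *m (jac (H ^~ u) x *m t.1 + jac (H x) u *m t.2)))
  :> (_ -> phase R n m).
Proof.
move=> dG dF dH.
have dGfst : differentiable (fun z : 'cV[R]_n * 'cV[R]_m => G z.1) (x, u).
  exact: differentiable_comp.
have dP := differentiable_mulmx dGfst dF.
have dS := differentiable_mulmx (differentiable_cst sigma (x, u)) dH.
have dfst : differentiable (fun z : 'cV[R]_n * 'cV[R]_m => z.1) (x, u).
  exact: ex_diff.
have dsnd : differentiable (fun z : 'cV[R]_n * 'cV[R]_m => z.2) (x, u).
  exact: ex_diff.
have dB : differentiable
    (fun z : 'cV[R]_n * 'cV[R]_m => (z.1, G z.1 *m F z.1 z.2)) (x, u).
  exact: differentiable_pair.
have dA : differentiable
    (fun z : 'cV[R]_n * 'cV[R]_m => (z.1, G z.1 *m F z.1 z.2, z.2)) (x, u).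
  exact: differentiable_pair.
rewrite /graph_param (diff_pair dA dS) (diff_pair dB dsnd) (diff_pair dfst dP).
apply/funext => t /=; congr (_, _, _, _).
- by rewrite diff_val.
- by rewrite diff_mulmx // (deriveE t dF) diff_partial_jac.
- by rewrite diff_val.
- by rewrite diff_mulmx // derive_cst mul0mx add0r (deriveE t dH) diff_partial_jac.
Qed.

End graph_param_differential.

Section symplectic.
Context {R : realType} (n m : nat).

Lemma lagrangian_graphP (beta : 'cV[R]_n * 'cV[R]_m -> 'cV[R]_n)
    (delta : 'cV[R]_n * 'cV[R]_m -> 'cV[R]_m) :
  let L t := (t.1, beta t, t.2, delta t) : phase R n m in
  lagrangian_subspace (range L) <-> forall t t', omega (L t) (L t') = 0.
Proof.
move=> L; split=> [[isoL _] t t'|isoL]; first by apply: isoL; [exists t|exists t'].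
split=> [_ _ [t _ <-] [t' _ <-] //|T' LT' isoT' addT' scaleT'].
(* An isotropic subspace T' containing the graph also contains w - L (a, c)
   = (0, b - beta (a, c), 0, d - delta (a, c)) for each of its points w, and
   pairing this vector with the L t over basis vectors reads off b - beta (a, c)
   and d - delta (a, c). *)
apply/seteqP; split=> // -[[[a b] c] d] T'w.
have T'L t : T' (L t) by apply: LT'; exists t.
have T'wv := addT' _ _ T'w (scaleT' (-1) _ (T'L (a, c))).
rewrite !scaleN1r in T'wv.
rewrite -[_ + _]/(a - a, b - beta (a, c), c - c, d - delta (a, c)) !subrr in T'wv.
have -> : b = beta (a, c).
  apply/matrixP => k j; rewrite (ord1 j); apply/eqP; rewrite -subr_eq0; apply/eqP.
  have := isoT' _ _ T'wv (T'L (delta_mx k ord0, 0)).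
  by rewrite omegaE !dot0r dot_delta !mxE; lra.
have -> : d = delta (a, c).
  apply/matrixP => k j; rewrite (ord1 j); apply/eqP; rewrite -subr_eq0; apply/eqP.
  have := isoT' _ _ T'wv (T'L (0, delta_mx k ord0)).
  by rewrite omegaE !dot0r dot_delta !mxE; lra.
by exists (a, c).
Qed.

End symplectic.

Section reciprocity_conditions.
Context {R : realType} (n m : nat).

Local Notation e i := (delta_mx i ord0).

Lemma isotropic_graphP (G Fx : 'M[R]_n) (Fu : 'M[R]_(n, m)) (Hx : 'M[R]_(m, n))
    (Hu s : 'M[R]_m) (D : 'cV[R]_n -> 'cV[R]_n) :
  G^T = G -> s^T = s -> (forall a b, dot (D a) b = dot (D b) a) ->
  (forall t t' : 'cV[R]_n * 'cV[R]_m,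
     omega (t.1, D t.1 + G *m (Fx *m t.1 + Fu *m t.2), t.2, s *m (Hx *m t.1 + Hu *m t.2))
       (t'.1, D t'.1 + G *m (Fx *m t'.1 + Fu *m t'.2), t'.2,
        s *m (Hx *m t'.1 + Hu *m t'.2)) = 0) <->
  [/\ s *m Hu = Hu^T *m s, G *m Fu = Hx^T *m s & G *m Fx = Fx^T *m G].
Proof.
move=> sG ss sD; split=> [iso|[sHu GFu GFx] [a c] [a' c']]; last first.
  have GFx_dot : dot (G *m (Fx *m a)) a' = dot (G *m (Fx *m a')) a.
    by rewrite !mulmxA dot_mulmx trmx_mul sG -GFx.
  have GFu_dot c1 a1 : dot (G *m (Fu *m c1)) a1 = dot (s *m (Hx *m a1)) c1.
    by rewrite !mulmxA dot_mulmx GFu trmx_mul trmxK ss.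
  have sHu_dot : dot (s *m (Hu *m c)) c' = dot (s *m (Hu *m c')) c.
    by rewrite !mulmxA dot_mulmx trmx_mul ss -sHu.
  have := GFu_dot c a'; have := GFu_dot c' a; have := sD a a'.
  rewrite omegaE /= !mulmxDr !dotDl; lra.
split; apply/matrixP => i j.
- have := iso (0, e j) (0, e i).
  rewrite omegaE /= !dot0r !mulmx0 !add0r !mulmxA !dot_mulmx_delta => iso_ij.
  have -> : Hu^T *m s = (s *m Hu)^T by rewrite trmx_mul ss.
  rewrite [RHS]mxE; lra.
- have := iso (e i, 0) (0, e j).
  rewrite omegaE /= !dot0r !mulmx0 !addr0 !add0r dotDl (sD 0) dot0r add0r.
  rewrite !mulmxA !dot_mulmx_delta => iso_ij.
  have -> : Hx^T *m s = (s *m Hx)^T by rewrite trmx_mul ss.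
  rewrite [RHS]mxE; lra.
- have := iso (e j, 0) (e i, 0).
  rewrite omegaE /= !dot0r !mulmx0 !addr0 !dotDl (sD (e j)) !mulmxA.
  rewrite !dot_mulmx_delta => iso_ij.
  have -> : Fx^T *m G = (G *m Fx)^T by rewrite trmx_mul sG.
  rewrite [RHS]mxE; lra.
Qed.

End reciprocity_conditions.

Lemma trmx_signature {R : realType} m (s : 'M[R]_m) : signature_matrix s -> s^T = s.
Proof.
move=> [/is_diag_mxP s_diag _]; apply/matrixP => i j; rewrite mxE.
by have [->|ij] := eqVneq i j; last by rewrite !s_diag // eq_sym.
Qed.

Theorem proposition3p6 (R : realType) (n m : nat) (X : set 'cV[R]_n)
    (K : 'cV[R]_n -> R) (sigma : 'M[R]_m)
    (F : 'cV[R]_n -> 'cV[R]_m -> 'cV[R]_n)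
    (H : 'cV[R]_n -> 'cV[R]_m -> 'cV[R]_m) :
  open X -> X !=set0 -> connected X ->
  convex_set (X : set (convex_lmodType 'cV[R]_n)) ->
  smooth_on X K ->
  (forall x, X x -> hessian K x \in unitmx) ->
  signature_matrix sigma ->
  smooth_on (X `*` setT) (fun z : 'cV[R]_n * 'cV[R]_m => F z.1 z.2) ->
  smooth_on (X `*` setT) (fun z : 'cV[R]_n * 'cV[R]_m => H z.1 z.2) ->
  reciprocal X (hessian K) sigma F H <->
  (forall x u, X x ->
     [/\ sigma *m jac (H x) u = (jac (H x) u)^T *m sigma,
         hessian K x *m jac (F x) u = (jac (H ^~ u) x)^T *m sigma &
         hessian K x *m jac (F ^~ u) x = (jac (F ^~ u) x)^T *m hessian K x]).
Proof.
move=> oX _ _ _ sK _ sigma_sig sF sH.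
suff pointwise x u : X x ->
    lagrangian_subspace (range ('d (graph_param (hessian K) sigma F H) (x, u))) <->
    [/\ sigma *m jac (H x) u = (jac (H x) u)^T *m sigma,
        hessian K x *m jac (F x) u = (jac (H ^~ u) x)^T *m sigma &
        hessian K x *m jac (F ^~ u) x = (jac (F ^~ u) x)^T *m hessian K x].
  by split=> h x u Xx; apply/(pointwise x u Xx)/h.
move=> Xx; have Xxu : (X `*` setT) (x, u) by [].
rewrite diff_graph_param; first last.
- exact: smooth_on_differentiable sH Xxu.
- exact: smooth_on_differentiable sF Xxu.
- exact (differentiable_hessian oX sK Xx).
apply: iff_trans (lagrangian_graphP _ _) _.
exact (isotropic_graphP _ _ _ _ (trmx_hessian oX sK Xx) (trmx_signature sigma_sig)
  (fun a b => dot_derive_hessianC oX sK (F x u) a b Xx)).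
Qed.
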